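(* Let $\alpha$ be an expanding algebraic number, $\mathcal{D}\subset\mathbb{Z}[\alpha]$ a standard digit set for $\alpha$, and $m\in\mathbb{Z}$ with $\mathcal{D}\subset\alpha^m\mathbb{Z}[\alpha^{-1}]$. Suppose $\mathcal{D}$ contains a complete residue system of $\alpha^m\mathbb{Z}[\alpha^{-1}]/\alpha^{m-1}\mathbb{Z}[\alpha^{-1}]$. Then for every $x\in\Lambda_{\alpha,m}$ there is $d\in\mathcal{D}$ with $\alpha x+d\in\Lambda_{\alpha,m}$, and consequently $\mathcal{G}(x)\neq\emptyset$.
   Context: $\alpha$ is an algebraic number all of whose conjugates have modulus $>1$. $K=\mathbb{Q}(\alpha)$, $\alpha\mathcal{O}_K=\mathfrak{a}/\mathfrak{b}$ with coprime integral ideals; $S_\alpha$ = infinite primes together with primes dividing $\mathfrak{b}$; $\mathbb{K}_\alpha=\prod_{\mathfrak{p}\in S_\alpha}K_\mathfrak{p}$ (completions), $\Phi_\alpha$ diagonal embedding. $\mathcal{D}$ standard: complete residue system of $\mathbb{Z}[\alpha]/\alpha\mathbb{Z}[\alpha]$. $\mathcal{F}=\{\sum_{k\ge1}\Phi_\alpha(d_k\alpha^{-k}):d_k\in\mathcal{D}\}$; $\mathcal{G}(x)=\{(z_\mathfrak{p})\in\mathcal{F}+\Phi_\alpha(x): z_\mathfrak{p}=0\ \forall\mathfrak{p}\mid\mathfrak{b}\}$. $\Lambda_{\alpha,k}=\mathbb{Z}[\alpha]\cap\alpha^{k-1}\mathbb{Z}[\alpha^{-1}]$. *)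

From HB Require Import structures.
From mathcomp Require Import all_boot all_order all_algebra all_field.
Set Implicit Arguments. Unset Strict Implicit. Unset Printing Implicit Defensive.
Import Order.TTheory GRing.Theory Num.Theory.
Local Open Scope ring_scope.

(* All objects live in algC, the algebraic closure of Q; alpha : algC is
   automatically an algebraic number. *)

Definition expanding (a : algC) : Prop :=
  forall z : algC, root (minCpoly a) z -> 1 < `|z|.

Definition Zadj (b z : algC) : Prop :=
  exists p : {poly int}, z = (map_poly (fun n : int => n%:~R) p).[b].

Definition powZinv (a : algC) (m : int) (z : algC) : Prop :=
  exists y, Zadj a^-1 y /\ z = a ^ m * y.

Definition Lambda (a : algC) (k : int) (z : algC) : Prop :=
  Zadj a z /\ powZinv a (k - 1) z.

Definition complete_residue_system (A M D : algC -> Prop) : Prop :=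
  (forall d, D d -> A d) /\
  (forall z, A z -> exists! d, D d /\ M (z - d)).

Definition standard_digits (a : algC) (D : algC -> Prop) : Prop :=
  complete_residue_system (Zadj a) (fun z => exists y, Zadj a y /\ z = a * y) D.

Definition Qadj (a z : algC) : Prop :=
  exists p : {poly rat}, z = (map_poly ratr p).[a].
Definition OK (a z : algC) : Prop := Qadj a z /\ z \in Aint.

Definition prime_ideal_OK (a : algC) (P : algC -> Prop) : Prop :=
  (forall z, P z -> OK a z) /\
  P 0 /\
  (forall y z, P y -> P z -> P (y + z)) /\
  (forall r z, OK a r -> P z -> P (r * z)) /\
  ~ P 1 /\
  (forall y z, OK a y -> OK a z -> P (y * z) -> P y \/ P z) /\
  (exists z, P z /\ z <> 0).

(* the denominator ideal b of a O_K = a/b : b = { z in O_K | a z in O_K } *)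
Definition den_ideal (a z : algC) : Prop := OK a z /\ OK a (a * z).

Fixpoint ideal_pow (a : algC) (P : algC -> Prop) (n : nat) : algC -> Prop :=
  match n with
  | 0 => OK a
  | n.+1 => fun z => exists s : seq (algC * algC),
      (forall q, q \in s -> P q.1 /\ ideal_pow a P n q.2) /\
      z = \sum_(q <- s) q.1 * q.2
  end.

(* v_P(y) >= N, for y in K  (y ∈ P^N O_{K,P}) *)
Definition val_ge (a : algC) (P : algC -> Prop) (N : nat) (y : algC) : Prop :=
  exists s, [/\ OK a s, ~ P s & ideal_pow a P N (s * y)].

Definition padic_to0 (a : algC) (P : algC -> Prop) (y : nat -> algC) : Prop :=
  forall N : nat, exists n0 : nat, forall n, (n0 <= n)%N -> val_ge a P N (y n).

(* G(x) is nonempty: there is a digit sequence (d_k)_{k>=1} in D such that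
   for every prime P | b, the P-adic component of
   sum_{k>=1} d_k a^-k + x vanishes, i.e. the partial sums of
   x + sum_k d_k a^-k tend to 0 in K_P.  (The infinite components carry no
   constraint in the definition of G(x).) *)
Definition G_nonempty (a : algC) (D : algC -> Prop) (x : algC) : Prop :=
  exists d : nat -> algC, (forall k, D (d k)) /\
    forall P, prime_ideal_OK a P -> (forall z, den_ideal a z -> P z) ->
      padic_to0 a P (fun n => x + \sum_(1 <= k < n.+1) d k * a ^- k).

(* Digit step: -a x lies in a^m Z[a^-1], so some d in D' (a subset of D) is
   congruent to it modulo a^(m-1) Z[a^-1], and then a x + d is again in
   Z[a] and in a^(m-1) Z[a^-1].  Iterating from x gives x_n in Lambda with
   x + sum_(k <= n) d_k a^-k = a^-n x_n in a^(m-1-n) Z[a^-1].  For a prime P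
   dividing the denominator ideal b, the numerator ideal a b is prime to P
   (a primitive integer equation of a expresses its content 1 through a b
   and b), so a^-1 = z / v with z in P and v a P-unit; hence the partial
   sums tend to 0 in K_P.  Membership in O_K comes from the fact that
   Z[a] and Z[a^-1] have only algebraic integers in common. *)

From HB Require Import structures.
From mathcomp Require Import all_boot all_order all_algebra all_field.
From mathcomp Require Import ring.
From Stdlib Require Import Classical ClassicalEpsilon FunctionalExtensionality.
Import Order.TTheory GRing.Theory Num.Theory.
Set Implicit Arguments. Unset Strict Implicit. Unset Printing Implicit Defensive.
Local Open Scope ring_scope.

Section AdjunctionClosure.
Variable b : algC.

Lemma Zadj_add x y : Zadj b x -> Zadj b y -> Zadj b (x + y).
Proof. by move=> [p ->] [q ->]; exists (p + q); rewrite rmorphD hornerD. Qed.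

Lemma Zadj_opp x : Zadj b x -> Zadj b (- x).
Proof. by move=> [p ->]; exists (- p); rewrite rmorphN hornerN. Qed.

Lemma Zadj_sub x y : Zadj b x -> Zadj b y -> Zadj b (x - y).
Proof. by move=> Zx /Zadj_opp; apply: Zadj_add. Qed.

Lemma Zadj_mul x y : Zadj b x -> Zadj b y -> Zadj b (x * y).
Proof. by move=> [p ->] [q ->]; exists (p * q); rewrite rmorphM hornerM. Qed.

Lemma Zadj_int (n : int) : Zadj b n%:~R.
Proof. by exists n%:P; rewrite map_polyC hornerC. Qed.

Lemma Zadj_gen : Zadj b b.
Proof. by exists 'X; rewrite map_polyX hornerX. Qed.

Lemma Qadj_add x y : Qadj b x -> Qadj b y -> Qadj b (x + y).
Proof. by move=> [p ->] [q ->]; exists (p + q); rewrite rmorphD hornerD. Qed.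

Lemma Qadj_opp x : Qadj b x -> Qadj b (- x).
Proof. by move=> [p ->]; exists (- p); rewrite rmorphN hornerN. Qed.

Lemma Qadj_mul x y : Qadj b x -> Qadj b y -> Qadj b (x * y).
Proof. by move=> [p ->] [q ->]; exists (p * q); rewrite rmorphM hornerM. Qed.

Lemma Zadj_Qadj x : Zadj b x -> Qadj b x.
Proof.
move=> [p ->]; exists (map_poly intr p); rewrite -map_poly_comp.
by congr (_.[b]); apply: eq_map_poly => n /=; rewrite rmorph_int.
Qed.

Lemma OK_add x y : OK b x -> OK b y -> OK b (x + y).
Proof. by move=> [? ?] [? ?]; split; [apply: Qadj_add | rewrite rpredD]. Qed.

Lemma OK_opp x : OK b x -> OK b (- x).
Proof. by move=> [? ?]; split; [apply: Qadj_opp | rewrite rpredN]. Qed.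

Lemma OK_mul x y : OK b x -> OK b y -> OK b (x * y).
Proof. by move=> [? ?] [? ?]; split; [apply: Qadj_mul | rewrite rpredM]. Qed.

Lemma OK_int (n : int) : OK b n%:~R.
Proof. by split; [apply/Zadj_Qadj/Zadj_int | apply: Aint_int]. Qed.

Lemma OK_exp x k : OK b x -> OK b (x ^+ k).
Proof.
move=> Ox; elim: k => [|k IH]; first by rewrite expr0; apply: (OK_int 1).
by rewrite exprS; apply: OK_mul.
Qed.

Lemma OK_sum I (r : seq I) (P : pred I) (F : I -> algC) :
  (forall i, P i -> OK b (F i)) -> OK b (\sum_(i <- r | P i) F i).
Proof.
move=> OF; elim/big_rec: _ => [|i x Pi Ox]; first exact: (OK_int 0).
by apply: OK_add => //; apply: OF.
Qed.

End AdjunctionClosure.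

Notation ev b p := ((map_poly (fun n : int => n%:~R) p).[b]).

Lemma horner_int_poly (b : algC) (p : {poly int}) :
  ev b p = \sum_(l < size p) (p`_l)%:~R * b ^+ l.
Proof.
rewrite horner_coef size_map_inj_poly //; last exact: intr_inj.
by apply: eq_bigr => l _; rewrite coef_map.
Qed.

Definition int_span n (Y : 'I_n -> algC) (y : algC) : Prop :=
  exists c : 'I_n -> int, y = \sum_i Y i *~ c i.

Section IntSpan.
Variables (n : nat) (Y : 'I_n -> algC).

Lemma int_span_add x y : int_span Y x -> int_span Y y -> int_span Y (x + y).
Proof.
move=> [c ->] [c' ->]; exists (fun i => c i + c' i).
by rewrite -big_split; apply: eq_bigr => i _; rewrite mulrzDr.
Qed.

Lemma int_span_mulrz x (k : int) : int_span Y x -> int_span Y (x *~ k).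
Proof.
move=> [c ->]; exists (fun i => c i * k).
by rewrite mulrz_suml; apply: eq_bigr => i _; rewrite mulrzA.
Qed.

Lemma int_span_gen i : int_span Y (Y i).
Proof.
exists (fun j => (j == i)%:R); rewrite (bigD1 i) //= eqxx mulr1z big1 ?addr0 //.
by move=> j /negPf ->; rewrite mulr0z.
Qed.

Lemma int_span_sum m (F : 'I_m -> algC) :
  (forall l, int_span Y (F l)) -> int_span Y (\sum_l F l).
Proof.
move=> hF; elim/big_rec: _ => [|l y _]; last exact: int_span_add.
by exists (fun _ => 0); rewrite big1 // => i _; rewrite mulr0z.
Qed.

(* The matrix of multiplication by x in the spanning family Y is integral,
   and Y is a nonzero eigenvector of it. *)
Lemma Aint_int_span x i0 : Y i0 != 0 ->
  (forall j, int_span Y (x * Y j)) -> x \in Aint.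
Proof.
move=> nzY0 /fin_all_exists[A HA].
pose M := \matrix_(i, j < n) ((A j i)%:~R : algC).
have intM : char_poly M \is a polyOver Num.int_num_subdef.
  rewrite rpred_sum // => s _; rewrite rpredMsign rpred_prod // => j _.
  by rewrite !mxE /= rpredB ?rpredMn ?polyOverX ?polyOverC ?rpred_int.
apply: root_monic_Aint (char_poly_monic _) intM.
rewrite -eigenvalue_root_char; apply/eigenvalueP; exists (\row_i Y i).
  apply/rowP=> j; rewrite !mxE HA.
  by apply: eq_bigr => i _; rewrite !mxE mulrzr.
by apply/eqP => /rowP /(_ i0); rewrite !mxE => Y0; rewrite Y0 eqxx in nzY0.
Qed.

End IntSpan.

(* z p(a) and z q(a^-1) stay in the span of a^i a^-K, i < J + K + 1,
   where J, K are the sizes of p and q. *)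
Lemma Aint_Zadj_Zadj_inv (a z : algC) : a != 0 ->
  Zadj a z -> Zadj a^-1 z -> z \in Aint.
Proof.
move=> nza [p zp] [q zq]; set J := size p; set K := size q.
pose Y (i : 'I_(J + K).+1) := a ^+ i * a^-1 ^+ K.
have nzY0 : Y ord0 != 0 by rewrite /Y mul1r expf_neq0 // invr_eq0.
have YS i (lt_i : (i < (J + K).+1)%N) : int_span Y (a ^+ i * a^-1 ^+ K).
  exact: int_span_gen Y (Ordinal lt_i).
apply: (Aint_int_span nzY0) => j; rewrite /Y.
have [jK | Kj] := ltnP j K.
  rewrite {1}zp horner_int_poly mulr_suml; apply: int_span_sum => l.
  have -> : (p`_l)%:~R * a ^+ l * (a ^+ j * a^-1 ^+ K)
      = a ^+ (j + l) * a^-1 ^+ K *~ p`_l by rewrite exprD -mulrzr; ring.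
  by apply/int_span_mulrz/YS; rewrite ltnS addnC leq_add // ltnW.
rewrite {1}zq horner_int_poly mulr_suml; apply: int_span_sum => l.
have lj : (l <= j)%N by rewrite ltnW // (leq_trans _ Kj).
have -> : (q`_l)%:~R * a^-1 ^+ l * (a ^+ j * a^-1 ^+ K)
    = a ^+ (j - l) * a^-1 ^+ K *~ q`_l.
  by rewrite exprB ?unitfE // exprVn -mulrzr; ring.
by apply/int_span_mulrz/YS; rewrite (leq_ltn_trans (leq_subr _ _) (ltn_ord j)).
Qed.

Lemma primitive_int_poly_root (a : algC) :
  exists f : {poly int}, zcontents f = 1 /\ ev a f = 0.
Proof.
have [p [Dp monp] _] := minCpolyP a.
have [q [c nzc Epq]] := rat_poly_scale p.
have nzq : q != 0.
  apply: contraTneq (monic_neq0 monp) => q0.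
  by rewrite Epq q0 rmorph0 scaler0 eqxx.
have qa0 : ev a q = 0.
  have := root_minCpoly a; rewrite Dp Epq /root map_polyZ hornerZ -map_poly_comp.
  rewrite mulf_eq0 fmorph_eq0 invr_eq0 intr_eq0 (negPf nzc) /= => /eqP <-.
  by congr (_.[a]); apply: eq_map_poly => n /=; rewrite rmorph_int.
exists (zprimitive q); split; first by rewrite zcontents_primitive nzq.
move: qa0; rewrite {1}[q]zpolyEprim map_polyZ hornerZ => /eqP.
by rewrite mulf_eq0 intr_eq0 zcontents_eq0 (negPf nzq) => /eqP.
Qed.

(* Bezout: the content is a Z-linear combination of the coefficients. *)
Lemma zcontents_in (S : algC -> Prop) (f : {poly int}) :
  S 0 -> (forall y z, S y -> S z -> S (y + z)) ->
  (forall (k : int) z, S z -> S (k%:~R * z)) ->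
  (forall i, S (f`_i)%:~R) -> S (zcontents f)%:~R.
Proof.
move=> S0 SD SZ Sf; rewrite /zcontents rmorphM /=; apply: (SZ).
have Sabs i : S (absz f`_i)%:R.
  have [fi_ge0 | fi_lt0] := leP 0 f`_i.
    by rewrite -[_%:R]/((absz f`_i)%:~R) gez0_abs.
  rewrite -[_%:R]/((absz f`_i)%:~R) ltz0_abs // mulrNz.
  by have := SZ (-1) _ (Sf i); rewrite rmorphN1 mulN1r.
elim/big_rec: _ => [|i g _ Sg] //.
have [u [v Duv]] := Bezoutz (absz f`_i) g.
rewrite (_ : Posz (gcdn _ _) = gcdz (absz f`_i) g) // -Duv rmorphD !rmorphM /=.
by apply: (SD); apply: (SZ); [exact: Sabs | exact: Sg].
Qed.

Lemma drop_polyS (R : nzRingType) (p : {poly R}) s :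
  drop_poly s p = (p`_s)%:P + drop_poly s.+1 p * 'X.
Proof.
apply/polyP => i; rewrite coefD coefC coefMX !coef_drop_poly.
by case: i => [|i] /=; rewrite ?addr0 ?add0r // addnS addSn.
Qed.

Section HornerTail.
Variables (a : algC) (f : {poly int}).
Hypotheses (nza : a != 0) (fa0 : ev a f = 0).

Definition horner_tail s := ev a (drop_poly s f).

Lemma horner_tail0 : horner_tail 0 = 0.
Proof. by rewrite /horner_tail drop_poly0l. Qed.

Lemma horner_tailS s : horner_tail s = (f`_s)%:~R + a * horner_tail s.+1.
Proof.
rewrite /horner_tail {1}drop_polyS rmorphD rmorphM /= map_polyC map_polyX.
by rewrite hornerD hornerM hornerC hornerX mulrC.
Qed.

Lemma horner_tail_Zadj_inv s : Zadj a^-1 (horner_tail s).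
Proof.
elim: s => [|s IH]; first by rewrite horner_tail0; apply: (Zadj_int _ 0).
have -> : horner_tail s.+1 = a^-1 * (horner_tail s - (f`_s)%:~R).
  by rewrite [horner_tail s]horner_tailS addrAC subrr add0r mulKf.
by apply: Zadj_mul; [apply: Zadj_gen | apply: Zadj_sub IH (Zadj_int _ _)].
Qed.

Lemma horner_tail_OK s : OK a (horner_tail s).
Proof.
have Zt : Zadj a (horner_tail s) by exists (drop_poly s f).
split; first exact: Zadj_Qadj.
exact: Aint_Zadj_Zadj_inv nza Zt (horner_tail_Zadj_inv s).
Qed.

Lemma horner_tail_den_ideal s : den_ideal a (horner_tail s.+1).
Proof.
split; first exact: horner_tail_OK.
rewrite (_ : a * _ = horner_tail s - (f`_s)%:~R); last first.
  by rewrite [horner_tail s]horner_tailS addrAC subrr add0r.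
by apply: OK_add; [apply: horner_tail_OK | apply/OK_opp/OK_int].
Qed.

End HornerTail.

(* The coefficients of a primitive equation of a are the differences
   t_s - a t_(s+1) of its Horner tails, and the t_(s+1) lie in the
   denominator ideal; so if a * den_ideal were inside P, the content 1
   would be in P. *)
Lemma den_ideal_mul_notin_prime (a : algC) (P : algC -> Prop) : a != 0 ->
  prime_ideal_OK a P -> (forall z, den_ideal a z -> P z) ->
  exists z, den_ideal a z /\ ~ P (a * z).
Proof.
move=> nza [_ [P0 [PD [PM [P1 _]]]]] Pden; apply: NNPP => no_z.
have Pnum z : den_ideal a z -> P (a * z).
  by move=> dz; apply: NNPP => nPaz; apply: no_z; exists z.
have PZ (k : int) z : P z -> P (k%:~R * z) by apply: PM; apply: OK_int.
have [f [f_prim fa0]] := primitive_int_poly_root a.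
have Pt s : P (horner_tail a f s).
  case: s => [|s]; first by rewrite horner_tail0.
  by apply/Pden/horner_tail_den_ideal.
apply: P1; rewrite -[1]/((1 : int)%:~R) -f_prim; apply: zcontents_in => // s.
rewrite (_ : _%:~R = horner_tail a f s + (-1)%:~R * (a * horner_tail a f s.+1)).
  by apply: PD (Pt s) (PZ _ _ (Pnum _ (horner_tail_den_ideal nza fa0 s))).
by rewrite [horner_tail a f s]horner_tailS rmorphN1 mulN1r addrK.
Qed.

Lemma ideal_pow_expr_mul (a : algC) (P : algC -> Prop) (u w : algC) N :
  P u -> OK a w -> ideal_pow a P N (u ^+ N * w).
Proof.
move=> Pu Ow; elim: N => [|N IH]; first by rewrite expr0 mul1r.
exists [:: (u, u ^+ N * w)]; split; first by move=> q; rewrite inE => /eqP ->.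
by rewrite big_seq1 exprS mulrA.
Qed.

Lemma notin_prime_expr (a : algC) (P : algC -> Prop) v k :
  prime_ideal_OK a P -> OK a v -> ~ P v -> ~ P (v ^+ k).
Proof.
move=> [_ [_ [_ [_ [P1 [Pprime _]]]]]] Ov nPv.
elim: k => [|k IH]; first by rewrite expr0.
by rewrite exprS => /Pprime [] //; apply: OK_exp.
Qed.

(* With z in the denominator ideal and v = a z outside P, a^-1 = z / v:
   multiplying by a power of the P-unit v clears the denominators of
   a^-k q(a^-1) and leaves the factor z^k. *)
Lemma val_ge_expVn_Zadj_inv (a : algC) (P : algC -> Prop) (N k : nat) y :
  a != 0 -> prime_ideal_OK a P -> (forall z, den_ideal a z -> P z) ->
  (N <= k)%N -> Zadj a^-1 y -> val_ge a P N (a^-1 ^+ k * y).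
Proof.
move=> nza HP Pden leNk [q ->].
have [z [[Oz Oaz] nPaz]] := den_ideal_mul_notin_prime nza HP Pden.
have Pz : P z by apply/Pden.
set v := a * z; set L := size q.
have vaV : v * a^-1 = z by rewrite /v mulrC mulrA mulVf // mul1r.
exists (v ^+ (k + L)); split; first exact: OK_exp.
  exact: notin_prime_expr HP Oaz nPaz.
rewrite (_ : _ * _ = z ^+ N * \sum_(i < L)
    z ^+ (k - N) * ((q`_i)%:~R * z ^+ i * v ^+ (L - i))).
  apply: ideal_pow_expr_mul => //; apply: OK_sum => i _.
  apply: OK_mul; first exact: OK_exp.
  apply: OK_mul; last exact: OK_exp.
  by apply: OK_mul; [apply: OK_int | apply: OK_exp].
rewrite horner_int_poly !mulr_sumr; apply: eq_bigr => i _.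
have leiL : (i <= L)%N by apply: ltnW.
rewrite -vaV mulrA -exprD (subnKC leNk) -{1}(subnK leiL) !exprD !exprMn.
ring.
Qed.

Lemma expVn_mul_exprz (a : algC) (M : int) n : a != 0 -> (`|M| <= n)%N ->
  exists k, (n - `|M| <= k)%N /\ a^-1 ^+ n * a ^ M = a^-1 ^+ k.
Proof.
move=> nza; case: M => j /= lejn.
  exists (n - j)%N; split => //.
  by rewrite -{1}(subnK lejn) exprD -mulrA -exprMn mulVf // expr1n mulr1.
exists (n + j.+1)%N; split.
  by rewrite (leq_trans (leq_subr _ _) (leq_addr _ _)).
by rewrite exprD [a^-1 ^+ j.+1]exprVn.
Qed.

Lemma padic_to0_Lambda (a : algC) (P : algC -> Prop) (m : int)
    (X : nat -> algC) :
  a != 0 -> prime_ideal_OK a P -> (forall z, den_ideal a z -> P z) ->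
  (forall n, Lambda a m (X n)) -> padic_to0 a P (fun n => a^-1 ^+ n * X n).
Proof.
move=> nza HP Pden LX N; exists (N + `|m - 1|)%N => n leNn.
have [_ [y [Zy ->]]] := LX n.
have le_m1_n : (`|m - 1| <= n)%N by rewrite (leq_trans (leq_addl _ _) leNn).
rewrite mulrA; have [k [lenk ->]] := expVn_mul_exprz nza le_m1_n.
apply: val_ge_expVn_Zadj_inv => //; apply: leq_trans lenk.
by rewrite leq_subRL // addnC.
Qed.

Lemma partial_sum_orbit (a : algC) (d X : nat -> algC) : a != 0 ->
  (forall n, X n.+1 = a * X n + d n.+1) ->
  forall n, X 0%N + \sum_(1 <= k < n.+1) d k * a ^- k = a^-1 ^+ n * X n.
Proof.
move=> nza XS; elim => [|n IH]; first by rewrite big_geq // addr0 expr0 mul1r.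
rewrite big_nat_recr //= addrA IH XS !exprVn exprS.
by field; rewrite expf_neq0.
Qed.

Lemma Lambda_mul_add_digit (a : algC) (D : algC -> Prop) (m : int) :
  a != 0 -> (forall d, D d -> Zadj a d) ->
  (exists D' : algC -> Prop, (forall d, D' d -> D d) /\
     complete_residue_system (powZinv a m) (powZinv a (m - 1)) D') ->
  forall x, Lambda a m x -> exists d, D d /\ Lambda a m (a * x + d).
Proof.
move=> nza DZ [D' [D'D [_ D'res]]] x [Zx [y [Zy Dx]]].
have ax_m : powZinv a m (- (a * x)).
  exists (- y); split; first exact: Zadj_opp.
  by rewrite Dx mulrA -{1}(expr1z a) -expfzDr // addrC subrK mulrN.
have [d [[D'd [y' [Zy' Dy']]] _]] := D'res _ ax_m.
exists d; split; first exact: D'D.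
split.
  by apply: Zadj_add; [apply: Zadj_mul (@Zadj_gen a) Zx | apply/DZ/D'D].
exists (- y'); split; first exact: Zadj_opp.
by rewrite mulrN -Dy' opprB opprK addrC.
Qed.

Lemma G_nonempty_of_Lambda_step (a : algC) (D : algC -> Prop) (m : int) :
  a != 0 ->
  (forall x, Lambda a m x -> exists d, D d /\ Lambda a m (a * x + d)) ->
  forall x, Lambda a m x -> G_nonempty a D x.
Proof.
move=> nza step x Lx.
pose digit (y : {y | Lambda a m y}) :=
  constructive_indefinite_description _ (step _ (proj2_sig y)).
pose next y : {y | Lambda a m y} :=
  exist _ _ (proj2 (proj2_sig (digit y))).
pose orbit n := iter n next (exist _ x Lx).
pose d k := proj1_sig (digit (orbit k.-1)).
exists d; split; first by move=> k; apply: (proj1 (proj2_sig (digit _))).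
move=> P HP Pden.
pose X n := proj1_sig (orbit n).
rewrite (_ : (fun n => _) = fun n => a^-1 ^+ n * X n).
  exact: padic_to0_Lambda nza HP Pden (fun n => proj2_sig (orbit n)).
by apply: functional_extensionality => n; apply: (partial_sum_orbit (X := X)).
Qed.

Theorem lemma6p10 (a : algC) (D : algC -> Prop) (m : int) :
  expanding a ->
  standard_digits a D ->
  (forall d, D d -> powZinv a m d) ->
  (exists D' : algC -> Prop, (forall d, D' d -> D d) /\
     complete_residue_system (powZinv a m) (powZinv a (m - 1)) D') ->
  forall x, Lambda a m x ->
    (exists d, D d /\ Lambda a m (a * x + d)) /\ G_nonempty a D x.
Proof.
move=> exp_a [DZ _] _ D'res x Lx.
have nza : a != 0.
  apply/eqP => a0; move: exp_a; rewrite a0 => /(_ 0 (root_minCpoly 0)).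
  by rewrite normr0 ltr10.
have step := Lambda_mul_add_digit nza DZ D'res.
by split; [apply: step | apply: G_nonempty_of_Lambda_step nza step x Lx].
Qed.
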